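(* For every constant $K>1$ there is a $K$-Lipschitz homeomorphism of a filled ideal hyperbolic triangle to itself which maps each side to itself and multiplies arc length along each side by exactly $K$. *)

From Stdlib Require Import Reals.
Open Scope R_scope.

Definition pt : Type := (R * R)%type.

Definition arcosh (t : R) : R := ln (t + sqrt (t * t - 1)).

(* hyperbolic distance in the upper half-plane {(x,y) | y > 0} *)
Definition hdist (p q : pt) : R :=
  arcosh (1 + ((fst p - fst q) ^ 2 + (snd p - snd q) ^ 2) / (2 * snd p * snd q)).

(* The filled ideal triangle with ideal vertices -1, 1, infinity *)
Definition ideal_triangle (p : pt) : Prop :=
  0 < snd p /\ -1 <= fst p <= 1 /\ 1 <= fst p ^ 2 + snd p ^ 2.

Definition side_left (p : pt) : Prop := 0 < snd p /\ fst p = -1.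
Definition side_right (p : pt) : Prop := 0 < snd p /\ fst p = 1.
Definition side_bottom (p : pt) : Prop := 0 < snd p /\ fst p ^ 2 + snd p ^ 2 = 1.

(* f maps the side S onto itself and multiplies arc length along S by exactly K
   (on a geodesic, arc length between two points equals hyperbolic distance) *)
Definition maps_side_stretching (f : pt -> pt) (S : pt -> Prop) (K : R) : Prop :=
  (forall p, S p -> S (f p)) /\
  (forall q, S q -> exists p, S p /\ f p = q) /\
  (forall p q, S p -> S q -> hdist (f p) (f q) = K * hdist p q).

Definition hcontinuous_on (A : pt -> Prop) (g : pt -> pt) : Prop :=
  forall p, A p -> forall eps, 0 < eps -> exists delta, 0 < delta /\
    forall q, A q -> hdist p q < delta -> hdist (g p) (g q) < eps.

From Stdlib Require Import Reals Lra Psatz.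
Open Scope R_scope.

(* The three horoballs of the ideal triangle (at infinity: [y >= 2]) are pairwise
   tangent, and each side crosses two of them, meeting at their point of tangency.
   The map multiplies the Busemann depth by [K] inside each horoball, keeping the
   horocyclic coordinate, and is the identity outside them; on a side the signed
   depth is an arc-length parameter, so arc length is multiplied by exactly [K].
   Inside one horoball the formula
   [cosh d = cosh (s - t) + (x - x') ^ 2 * exp (- (s + t)) / 8]
   in the depths [s, t] gives the [K]-Lipschitz bound; for points in different
   horoballs the added depth [(K - 1) (s + t)] is at most [(K - 1) d] by tangency.
   The inverse is the same construction with [1 / K]. *)

Lemma exp_le_compat a b : a <= b -> exp a <= exp b.
Proof. intros [Hlt | ->]; [left; apply exp_increasing |]; lra. Qed.

Lemma exp_ge_1 a : 0 <= a -> 1 <= exp a.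
Proof. intros; rewrite <- exp_0; apply exp_le_compat; lra. Qed.

Lemma ln_le_compat x y : 0 < x -> x <= y -> ln x <= ln y.
Proof. intros Hx [Hlt | ->]; [left; apply ln_increasing |]; lra. Qed.

Lemma cosh_exp x : cosh x = (exp x + / exp x) / 2.
Proof. unfold cosh; rewrite exp_Ropp; reflexivity. Qed.

Lemma sinh_exp x : sinh x = (exp x - / exp x) / 2.
Proof. unfold sinh; rewrite exp_Ropp; reflexivity. Qed.

Lemma cosh_Rabs x : cosh (Rabs x) = cosh x.
Proof.
  unfold Rabs; destruct (Rcase_abs x); [unfold cosh; rewrite Ropp_involutive |]; lra.
Qed.

Lemma cosh_increasing a b : 0 <= a -> a < b -> cosh a < cosh b.
Proof.
  intros Ha Hab. rewrite !cosh_exp.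
  assert (HA : 1 <= exp a) by (apply exp_ge_1; lra).
  assert (HAB : exp a < exp b) by (apply exp_increasing; lra).
  set (A := exp a) in *; set (B := exp b) in *.
  assert (Hinv : / A - / B = (B - A) / (A * B)) by (field; lra).
  assert (Hprod : / (A * B) < 1) by (rewrite <- Rinv_1; apply Rinv_lt_contravar; nra).
  assert ((B - A) / (A * B) < B - A) by (unfold Rdiv; nra).
  lra.
Qed.

Lemma cosh_le_compat a b : 0 <= a -> a <= b -> cosh a <= cosh b.
Proof. intros Ha [Hlt | ->]; [left; apply cosh_increasing |]; lra. Qed.

Lemma cosh_ge_1 x : 1 <= cosh x.
Proof. rewrite <- cosh_Rabs, <- cosh_0. apply cosh_le_compat; [lra | apply Rabs_pos]. Qed.

Lemma sinh_le_compat a b : a <= b -> sinh a <= sinh b.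
Proof. intros [Hlt | ->]; [left; apply sinh_lt |]; lra. Qed.

Lemma sinh_nonneg x : 0 <= x -> 0 <= sinh x.
Proof. intros; rewrite <- sinh_0; apply sinh_le_compat; lra. Qed.

Lemma cosh_sub_cosh a b : cosh a - cosh b = 2 * sinh ((a + b) / 2) * sinh ((a - b) / 2).
Proof.
  assert (Huv : forall u v, cosh (u + v) - cosh (u - v) = 2 * sinh u * sinh v).
  { intros u v. rewrite !cosh_exp, !sinh_exp. unfold Rminus. rewrite !exp_plus, exp_Ropp.
    pose proof (exp_pos u); pose proof (exp_pos v). field; lra. }
  rewrite <- Huv. f_equal; f_equal; field.
Qed.

Lemma cosh_sub_cosh_le a b a' b' : 0 <= b <= a -> 0 <= b' <= a' ->
  a - b <= a' - b' -> a + b <= a' + b' -> cosh a - cosh b <= cosh a' - cosh b'.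
Proof.
  intros. rewrite !cosh_sub_cosh.
  assert (0 <= sinh ((a + b) / 2)) by (apply sinh_nonneg; lra).
  assert (0 <= sinh ((a - b) / 2)) by (apply sinh_nonneg; lra).
  assert (sinh ((a + b) / 2) <= sinh ((a' + b') / 2)) by (apply sinh_le_compat; lra).
  assert (sinh ((a - b) / 2) <= sinh ((a' - b') / 2)) by (apply sinh_le_compat; lra).
  nra.
Qed.

Lemma arcosh_arg_pos a : 1 <= a -> 0 < a + sqrt (a * a - 1).
Proof. intros; pose proof (sqrt_pos (a * a - 1)); lra. Qed.

Lemma arcosh_cosh x : 0 <= x -> arcosh (cosh x) = x.
Proof.
  intros Hx. unfold arcosh.
  assert (Hsq : cosh x * cosh x - 1 = sinh x * sinh x).
  { rewrite cosh_exp, sinh_exp. pose proof (exp_pos x). field; lra. }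
  rewrite Hsq, sqrt_square by (apply sinh_nonneg; lra).
  replace (cosh x + sinh x) with (exp x) by (unfold cosh, sinh; field).
  apply ln_exp.
Qed.

Lemma cosh_arcosh a : 1 <= a -> cosh (arcosh a) = a.
Proof.
  intros Ha. rewrite cosh_exp. unfold arcosh. rewrite exp_ln by (apply arcosh_arg_pos; lra).
  assert (Hs : sqrt (a * a - 1) * sqrt (a * a - 1) = a * a - 1) by (apply sqrt_sqrt; nra).
  pose proof (arcosh_arg_pos a Ha).
  apply (Rmult_eq_reg_r (2 * (a + sqrt (a * a - 1)))); [| lra].
  field_simplify; [nra | lra].
Qed.

Lemma arcosh_ge_0 a : 1 <= a -> 0 <= arcosh a.
Proof.
  intros Ha. unfold arcosh. rewrite <- ln_1.
  pose proof (sqrt_pos (a * a - 1)). apply ln_le_compat; lra.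
Qed.

Lemma arcosh_le_iff a L : 1 <= a -> 0 <= L -> arcosh a <= L <-> a <= cosh L.
Proof.
  intros Ha HL. rewrite <- (cosh_arcosh a) at 2 by exact Ha.
  pose proof (arcosh_ge_0 a Ha). split; intro Hcmp.
  - apply cosh_le_compat; lra.
  - destruct (Rle_or_lt (arcosh a) L) as [|Hlt]; [assumption |].
    pose proof (cosh_increasing L (arcosh a) HL Hlt); lra.
Qed.

Lemma arcosh_lt_iff a L : 1 <= a -> 0 <= L -> arcosh a < L <-> a < cosh L.
Proof.
  intros Ha HL. rewrite <- (cosh_arcosh a) at 2 by exact Ha.
  pose proof (arcosh_ge_0 a Ha). split; intro Hcmp.
  - apply cosh_increasing; lra.
  - destruct (Rlt_or_le (arcosh a) L) as [|Hle]; [assumption |].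
    pose proof (cosh_le_compat L (arcosh a) HL Hle); lra.
Qed.

Definition half_plane (p : pt) : Prop := 0 < snd p.

Definition hcosh (p q : pt) : R :=
  1 + ((fst p - fst q) ^ 2 + (snd p - snd q) ^ 2) / (2 * snd p * snd q).

Section HalfPlaneDistance.

Variables p q : pt.
Hypotheses (Hp : 0 < snd p) (Hq : 0 < snd q).

Lemma hcosh_ge_1 : 1 <= hcosh p q.
Proof.
  unfold hcosh. pose proof (pow2_ge_0 (fst p - fst q)); pose proof (pow2_ge_0 (snd p - snd q)).
  assert (0 <= ((fst p - fst q) ^ 2 + (snd p - snd q) ^ 2) / (2 * snd p * snd q)); [| lra].
  apply Rmult_le_pos; [lra | left; apply Rinv_0_lt_compat; nra].
Qed.

Lemma hdist_ge_0 : 0 <= hdist p q.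
Proof. apply arcosh_ge_0, hcosh_ge_1. Qed.

Lemma cosh_hdist : cosh (hdist p q) = hcosh p q.
Proof. apply cosh_arcosh, hcosh_ge_1. Qed.

Lemma hdist_le_iff L : 0 <= L -> hdist p q <= L <-> hcosh p q <= cosh L.
Proof. intros; apply arcosh_le_iff; [apply hcosh_ge_1 | assumption]. Qed.

Lemma hdist_lt_iff L : 0 <= L -> hdist p q < L <-> hcosh p q < cosh L.
Proof. intros; apply arcosh_lt_iff; [apply hcosh_ge_1 | assumption]. Qed.

Lemma hdist_ge_of_cosh L : 0 <= L -> cosh L <= hcosh p q -> L <= hdist p q.
Proof.
  intros HL Hc. destruct (Rle_or_lt L (hdist p q)) as [|Hlt]; [assumption |].
  apply (hdist_lt_iff L HL) in Hlt. lra.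
Qed.

End HalfPlaneDistance.

Lemma hdist_sym p q : hdist p q = hdist q p.
Proof. unfold hdist. f_equal. f_equal. f_equal; ring. Qed.

Lemma hdist_refl p : hdist p p = 0.
Proof.
  unfold hdist. rewrite <- arcosh_cosh with (x := 0) by lra. rewrite cosh_0.
  f_equal. unfold Rdiv. ring.
Qed.

Lemma hcontinuous_on_subset (A B : pt -> Prop) f :
  (forall p, A p -> B p) -> hcontinuous_on B f -> hcontinuous_on A f.
Proof.
  intros HAB Hf p Hp eps Heps. destruct (Hf p (HAB p Hp) eps Heps) as [d [Hd Hq]].
  exists d; split; [assumption |]. intros q HqA; apply Hq, HAB, HqA.
Qed.

Lemma lipschitz_hcontinuous (A : pt -> Prop) f K : 0 < K ->
  (forall p q, A p -> A q -> hdist (f p) (f q) <= K * hdist p q) -> hcontinuous_on A f.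
Proof.
  intros HK Hf p Hp eps Heps. exists (eps / K). split; [apply Rdiv_lt_0_compat; lra |].
  intros q Hq Hd. pose proof (Hf p q Hp Hq).
  assert (K * hdist p q < eps); [| lra].
  apply (Rmult_lt_compat_l K) in Hd; [| lra].
  replace (K * (eps / K)) with eps in Hd by (field; lra). exact Hd.
Qed.

(** * Busemann function of the cusp at infinity *)

(* Normalised so that [bus p >= 0] is the horoball [y >= 2], which touches the
   horoballs of the same size at the cusps [1] and [-1]. *)
Definition bus (p : pt) : R := ln (snd p / 2).

Lemma exp_bus p : 0 < snd p -> exp (bus p) = snd p / 2.
Proof. intros; unfold bus; apply exp_ln; lra. Qed.

Lemma hcosh_bus p q : 0 < snd p -> 0 < snd q ->
  hcosh p q = cosh (bus p - bus q) + (fst p - fst q) ^ 2 * exp (- (bus p + bus q)) / 8.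
Proof.
  intros Hp Hq. rewrite cosh_exp.
  replace (exp (bus p - bus q)) with (exp (bus p) * / exp (bus q))
    by (unfold Rminus; rewrite exp_plus, exp_Ropp; reflexivity).
  rewrite exp_Ropp, exp_plus, !exp_bus by assumption. unfold hcosh. field. lra.
Qed.

Lemma sq_mul_exp_opp_le dx b c : b <= c -> dx ^ 2 * exp (- c) / 8 <= dx ^ 2 * exp (- b) / 8.
Proof.
  intros. pose proof (pow2_ge_0 dx). assert (exp (- c) <= exp (- b)) by (apply exp_le_compat; lra).
  nra.
Qed.

Lemma bus_lipschitz p q : 0 < snd p -> 0 < snd q -> Rabs (bus p - bus q) <= hdist p q.
Proof.
  intros Hp Hq. apply hdist_ge_of_cosh; [assumption | assumption | apply Rabs_pos |].
  rewrite cosh_Rabs, hcosh_bus by assumption.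
  pose proof (exp_pos (- (bus p + bus q))); pose proof (pow2_ge_0 (fst p - fst q)).
  assert (0 <= (fst p - fst q) ^ 2 * exp (- (bus p + bus q)) / 8) by nra. lra.
Qed.

(* Inversion in the circle of radius [2] about [(a, 0)]: an isometric involution
   exchanging the cusps [infinity] and [a]. *)
Definition inversion (a : R) (p : pt) : pt :=
  let u := fst p - a in let D := u ^ 2 + snd p ^ 2 in (a + 4 * u / D, 4 * snd p / D).

Lemma sum_sq_pos a b : 0 < b -> 0 < a ^ 2 + b ^ 2.
Proof. intros; pose proof (pow2_ge_0 a); assert (0 < b ^ 2) by (apply pow_lt; lra); lra. Qed.

Section Inversion.

Variable a : R.

Lemma inversion_pos p : 0 < snd p -> 0 < snd (inversion a p).
Proof.
  intros Hp. pose proof (sum_sq_pos (fst p - a) (snd p) Hp).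
  apply Rmult_lt_0_compat; [lra | apply Rinv_0_lt_compat; lra].
Qed.

Lemma inversion_involutive p : 0 < snd p -> inversion a (inversion a p) = p.
Proof.
  destruct p as [x y]; simpl; intros Hy. unfold inversion; simpl.
  pose proof (sum_sq_pos (x - a) y Hy).
  f_equal; field; split; try lra; nra.
Qed.

Lemma hdist_inversion p q : 0 < snd p -> 0 < snd q ->
  hdist (inversion a p) (inversion a q) = hdist p q.
Proof.
  destruct p as [x y], q as [x' y']; simpl; intros Hy Hy'.
  pose proof (sum_sq_pos (x - a) y Hy); pose proof (sum_sq_pos (x' - a) y' Hy').
  unfold hdist, inversion; simpl. do 2 f_equal. field. lra.
Qed.

Lemma exp_bus_inversion p : 0 < snd p ->
  exp (bus (inversion a p)) = 2 * snd p / ((fst p - a) ^ 2 + snd p ^ 2).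
Proof.
  intros Hp. rewrite exp_bus by (apply inversion_pos; assumption).
  pose proof (sum_sq_pos (fst p - a) (snd p) Hp). simpl. field. lra.
Qed.

(* The horoball [y >= 2] at infinity and its image under the inversion, the
   horoball of Euclidean diameter [2] at [a], are tangent. *)
Lemma bus_add_bus_inversion_le_hdist p q : 0 < snd p -> 0 < snd q ->
  0 <= bus p -> 0 <= bus (inversion a q) -> bus p + bus (inversion a q) <= hdist p q.
Proof.
  destruct p as [x1 y1], q as [x2 y2]; simpl fst; simpl snd. intros Hy1 Hy2 Hp Hq.
  pose proof (exp_bus_inversion (x2, y2) Hy2) as Eq; cbn [fst snd] in Eq.
  set (D := (x2 - a) ^ 2 + y2 ^ 2) in *.
  assert (HD : 0 < D) by (apply sum_sq_pos; assumption).
  assert (Hy1_ge : 2 <= y1).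
  { pose proof (exp_ge_1 _ Hp) as Hexp. rewrite exp_bus in Hexp by assumption. simpl in Hexp. lra. }
  assert (HD_le : D <= 2 * y2).
  { pose proof (exp_ge_1 _ Hq) as Hexp. rewrite Eq in Hexp.
    apply (Rmult_le_compat_r D) in Hexp; [| lra].
    replace (2 * y2 / D * D) with (2 * y2) in Hexp by (field; lra). lra. }
  assert (HD4 : D <= 4).
  { assert (y2 * y2 <= 2 * y2) by (unfold D in HD_le; pose proof (pow2_ge_0 (x2 - a)); lra).
    nra. }
  apply hdist_ge_of_cosh; simpl; try lra.
  rewrite cosh_exp, exp_plus, exp_bus, Eq by (simpl; lra). simpl.
  assert (Hid : hcosh (x1, y1) (x2, y2) - (y1 / 2 * (2 * y2 / D) + / (y1 / 2 * (2 * y2 / D))) / 2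
      = ((x1 - x2) ^ 2 + (x2 - a) ^ 2 * ((y1 ^ 2 - D) / D)) / (2 * y1 * y2)).
  { unfold hcosh, D in *; cbn [fst snd]. field. repeat split; lra. }
  assert (0 <= ((x1 - x2) ^ 2 + (x2 - a) ^ 2 * ((y1 ^ 2 - D) / D)) / (2 * y1 * y2)); [| lra].
  apply Rmult_le_pos; [| left; apply Rinv_0_lt_compat; nra].
  pose proof (pow2_ge_0 (x1 - x2)); pose proof (pow2_ge_0 (x2 - a)).
  assert (0 <= (y1 ^ 2 - D) / D) by (apply Rmult_le_pos; [nra | left; apply Rinv_0_lt_compat; lra]).
  nra.
Qed.

End Inversion.

Lemma inversion_triangle a p :
  a = 1 \/ a = -1 -> ideal_triangle p -> ideal_triangle (inversion a p).
Proof.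
  destruct p as [x y]. unfold ideal_triangle, inversion; cbn [fst snd].
  intros Ha [Hy [[Hx1 Hx2] Hn]].
  assert (Ha2 : a * a = 1) by (destruct Ha; subst; ring).
  pose proof (sum_sq_pos (x - a) y Hy) as HD.
  set (D := (x - a) ^ 2 + y ^ 2) in *.
  assert (HDge : 2 * (1 - a * x) <= D) by (unfold D; nra).
  assert (Hax : 0 <= 1 - a * x) by (destruct Ha; subst; lra).
  assert (Hshift : a * (a + 4 * (x - a) / D) = 1 - 4 * (1 - a * x) / D)
    by (destruct Ha; subst; field; lra).
  assert (Hfrac : 0 <= 4 * (1 - a * x) / D <= 2).
  { split; [apply Rmult_le_pos; [lra | left; apply Rinv_0_lt_compat; lra] |].
    apply (Rmult_le_reg_r D); [lra |].
    replace (4 * (1 - a * x) / D * D) with (4 * (1 - a * x)) by (field; lra).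
    lra. }
  split; [apply Rmult_lt_0_compat; [lra | apply Rinv_0_lt_compat; lra] |]. split.
  - destruct Ha; subst; lra.
  - assert (Hid : (a + 4 * (x - a) / D) ^ 2 + (4 * y / D) ^ 2 = 1 + 8 * (1 + a * x) / D).
    { destruct Ha; subst; unfold D in *; field; lra. }
    rewrite Hid. assert (0 <= 8 * (1 + a * x) / D); [| lra].
    apply Rmult_le_pos; [destruct Ha; subst; lra | left; apply Rinv_0_lt_compat; lra].
Qed.

(** * Stretching the horoball at infinity *)

Definition stretch_pos (K s : R) : R := if Rle_dec s 0 then s else K * s.

Lemma stretch_pos_nonneg K s : 0 <= s -> stretch_pos K s = K * s.
Proof.
  intros; unfold stretch_pos.
  destruct (Rle_dec s 0); [replace s with 0 by lra; ring | reflexivity].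
Qed.

Lemma stretch_pos_gt_0 K s : 0 < K -> 0 < s -> 0 < stretch_pos K s.
Proof. intros; rewrite stretch_pos_nonneg by lra; nra. Qed.

Lemma stretch_pos_inv K s : 0 < K -> stretch_pos (/ K) (stretch_pos K s) = s.
Proof.
  intros HK. unfold stretch_pos.
  destruct (Rle_dec s 0); [destruct (Rle_dec s 0); [reflexivity | lra] |].
  destruct (Rle_dec (K * s) 0); [nra | field; lra].
Qed.

Section Expanding.

Variable K : R.
Hypothesis HK : 1 <= K.

Lemma stretch_pos_sub_le s t : Rabs (stretch_pos K s - stretch_pos K t) <= K * Rabs (s - t).
Proof.
  unfold stretch_pos; destruct (Rle_dec s 0), (Rle_dec t 0); unfold Rabs;
    repeat destruct Rcase_abs; nra.
Qed.

Lemma stretch_pos_add_ge s t : s + t <= stretch_pos K s + stretch_pos K t.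
Proof. unfold stretch_pos; destruct (Rle_dec s 0), (Rle_dec t 0); nra. Qed.

End Expanding.

Section Contracting.

Variable K : R.
Hypothesis HK : 0 < K <= 1.

Lemma stretch_pos_sub_le_contract s t : Rabs (stretch_pos K s - stretch_pos K t) <= Rabs (s - t).
Proof.
  unfold stretch_pos; destruct (Rle_dec s 0), (Rle_dec t 0); unfold Rabs;
    repeat destruct Rcase_abs; nra.
Qed.

Lemma stretch_pos_add_ge_contract s t :
  s + t - (1 - K) * (Rabs s + Rabs t) <= stretch_pos K s + stretch_pos K t.
Proof.
  unfold stretch_pos; destruct (Rle_dec s 0), (Rle_dec t 0); unfold Rabs;
    repeat destruct Rcase_abs; nra.
Qed.

End Contracting.

Definition horo_stretch (K : R) (p : pt) : pt := (fst p, 2 * exp (stretch_pos K (bus p))).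

Lemma bus_vertical x s : bus (x, 2 * exp s) = s.
Proof. unfold bus; simpl. replace (2 * exp s / 2) with (exp s) by field. apply ln_exp. Qed.

Lemma horo_stretch_pos K p : 0 < snd (horo_stretch K p).
Proof. simpl; pose proof (exp_pos (stretch_pos K (bus p))); lra. Qed.

Lemma bus_horo_stretch K p : bus (horo_stretch K p) = stretch_pos K (bus p).
Proof. apply bus_vertical. Qed.

Lemma horo_stretch_vertical K x s : horo_stretch K (x, 2 * exp s) = (x, 2 * exp (stretch_pos K s)).
Proof. unfold horo_stretch. rewrite bus_vertical. reflexivity. Qed.

Lemma horo_stretch_out K p : 0 < snd p -> bus p <= 0 -> horo_stretch K p = p.
Proof.
  destruct p as [x y]; intros Hy Hb. unfold horo_stretch, stretch_pos.
  destruct (Rle_dec (bus (x, y)) 0); [| lra].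
  rewrite exp_bus by assumption. simpl. f_equal. field.
Qed.

Lemma horo_stretch_inv K p : 0 < K -> 0 < snd p -> horo_stretch (/ K) (horo_stretch K p) = p.
Proof.
  destruct p as [x y]; intros HK Hy. unfold horo_stretch at 1.
  rewrite bus_horo_stretch, stretch_pos_inv by assumption.
  rewrite exp_bus by assumption. simpl. f_equal. field.
Qed.

Lemma hcosh_horo_stretch K p q : hcosh (horo_stretch K p) (horo_stretch K q) =
  cosh (stretch_pos K (bus p) - stretch_pos K (bus q))
  + (fst p - fst q) ^ 2 * exp (- (stretch_pos K (bus p) + stretch_pos K (bus q))) / 8.
Proof. rewrite hcosh_bus by apply horo_stretch_pos. rewrite !bus_horo_stretch. reflexivity. Qed.

Lemma horo_stretch_lipschitz K p q : 1 <= K -> 0 < snd p -> 0 < snd q ->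
  hdist (horo_stretch K p) (horo_stretch K q) <= K * hdist p q.
Proof.
  intros HK Hp Hq.
  set (s := bus p); set (t := bus q); set (d := hdist p q).
  assert (Hd : Rabs (s - t) <= d) by (apply bus_lipschitz; assumption).
  assert (Hd0 : 0 <= d) by (apply hdist_ge_0; assumption).
  assert (Hcd : cosh d = cosh (s - t) + (fst p - fst q) ^ 2 * exp (- (s + t)) / 8)
    by (unfold d; rewrite cosh_hdist, hcosh_bus by assumption; reflexivity).
  apply hdist_le_iff; try apply horo_stretch_pos; [nra |].
  rewrite hcosh_horo_stretch. fold s t.
  pose proof (Rabs_pos (s - t)).
  assert (Hcosh : cosh (stretch_pos K s - stretch_pos K t) <= cosh (K * Rabs (s - t))).
  { rewrite <- cosh_Rabs. apply cosh_le_compat; [apply Rabs_pos | apply stretch_pos_sub_le; lra]. }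
  pose proof (sq_mul_exp_opp_le (fst p - fst q) _ _ (stretch_pos_add_ge K HK s t)).
  assert (cosh (Rabs (s - t)) <= cosh (K * Rabs (s - t))) by (apply cosh_le_compat; nra).
  assert (cosh d - cosh (Rabs (s - t)) <= cosh (K * d) - cosh (K * Rabs (s - t)))
    by (apply cosh_sub_cosh_le; nra).
  rewrite cosh_Rabs in *. lra.
Qed.

Lemma horo_stretch_hdist_out K p r : 1 <= K -> 0 < snd p -> 0 < snd r ->
  0 <= bus p -> bus r <= 0 -> hdist (horo_stretch K p) r <= hdist p r + (K - 1) * bus p.
Proof.
  intros HK Hp Hr Hs Ht.
  set (s := bus p) in *; set (t := bus r) in *; set (d := hdist p r).
  assert (Hd : Rabs (s - t) <= d) by (apply bus_lipschitz; assumption).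
  rewrite Rabs_right in Hd by lra.
  assert (Hcd : cosh d = cosh (s - t) + (fst p - fst r) ^ 2 * exp (- (s + t)) / 8)
    by (unfold d; rewrite cosh_hdist, hcosh_bus by assumption; reflexivity).
  apply hdist_le_iff; try apply horo_stretch_pos; [assumption | nra |].
  rewrite hcosh_bus by (try apply horo_stretch_pos; assumption).
  rewrite bus_horo_stretch, stretch_pos_nonneg by assumption. fold s t. simpl fst.
  pose proof (sq_mul_exp_opp_le (fst p - fst r) (s + t) (K * s + t) ltac:(nra)).
  assert (cosh (K * s - t) - cosh (s - t) <= cosh (d + (K - 1) * s) - cosh d)
    by (apply cosh_sub_cosh_le; nra).
  lra.
Qed.

Lemma horo_stretch_hcosh_contract K p q : 0 < K <= 1 -> 0 < snd p -> 0 < snd q ->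
  hcosh (horo_stretch K p) (horo_stretch K q) - 1
  <= exp ((1 - K) * (Rabs (bus p) + Rabs (bus q))) * (hcosh p q - 1).
Proof.
  intros HK Hp Hq. rewrite hcosh_horo_stretch, hcosh_bus by assumption.
  set (s := bus p); set (t := bus q); set (M := exp ((1 - K) * (Rabs s + Rabs t))).
  assert (HM : 1 <= M) by (apply exp_ge_1; pose proof (Rabs_pos s); pose proof (Rabs_pos t); nra).
  assert (Hcosh : cosh (stretch_pos K s - stretch_pos K t) <= cosh (s - t)).
  { rewrite <- cosh_Rabs, <- (cosh_Rabs (s - t)).
    apply cosh_le_compat; [apply Rabs_pos | apply stretch_pos_sub_le_contract; assumption]. }
  assert (Hexp : exp (- (stretch_pos K s + stretch_pos K t)) <= exp (- (s + t)) * M).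
  { unfold M; rewrite <- exp_plus; apply exp_le_compat.
    pose proof (stretch_pos_add_ge_contract K HK s t); lra. }
  pose proof (pow2_ge_0 (fst p - fst q)); pose proof (exp_pos (- (s + t))).
  pose proof (cosh_ge_1 (s - t)).
  assert ((fst p - fst q) ^ 2 * exp (- (stretch_pos K s + stretch_pos K t))
          <= (fst p - fst q) ^ 2 * (exp (- (s + t)) * M)) by (apply Rmult_le_compat_l; lra).
  nra.
Qed.

Lemma horo_stretch_continuous K : 0 < K -> hcontinuous_on half_plane (horo_stretch K).
Proof.
  intros HK. destruct (Rle_or_lt 1 K) as [HK1 | HK1].
  { intros p Hp. apply (lipschitz_hcontinuous half_plane _ K); [lra | | exact Hp].
    intros; apply horo_stretch_lipschitz; assumption. }
  intros p Hp eps Heps. unfold half_plane in Hp.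
  set (s := bus p); set (M := exp ((1 - K) * (2 * Rabs s + 1))).
  assert (HM : 1 <= M) by (apply exp_ge_1; pose proof (Rabs_pos s); nra).
  pose proof (cosh_increasing 0 eps ltac:(lra) Heps) as Hceps. rewrite cosh_0 in Hceps.
  set (a := 1 + (cosh eps - 1) / M).
  assert (Ha : 1 < a).
  { unfold a. assert (0 < (cosh eps - 1) / M) by (apply Rdiv_lt_0_compat; lra). lra. }
  assert (Haa : 0 < arcosh a).
  { destruct (Rle_or_lt (arcosh a) 0) as [Hle | Hlt]; [| exact Hlt].
    apply arcosh_le_iff in Hle; [rewrite cosh_0 in Hle |..]; lra. }
  exists (Rmin 1 (arcosh a)). split; [apply Rmin_glb_lt; lra |].
  intros q Hq Hpq. unfold half_plane in Hq.
  pose proof (Rmin_l 1 (arcosh a)); pose proof (Rmin_r 1 (arcosh a)).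
  assert (Hnear : hcosh p q < a).
  { rewrite <- (cosh_arcosh a) by lra. apply hdist_lt_iff; lra. }
  assert (Hbus : Rabs (bus q) <= Rabs s + 1).
  { pose proof (bus_lipschitz p q Hp Hq) as Hlip. fold s in Hlip.
    rewrite <- Rabs_Ropp, Ropp_minus_distr in Hlip.
    pose proof (Rabs_triang_inv (bus q) s). lra. }
  assert (HMq : exp ((1 - K) * (Rabs s + Rabs (bus q))) <= M)
    by (apply exp_le_compat; pose proof (Rabs_pos s); nra).
  pose proof (horo_stretch_hcosh_contract K p q ltac:(lra) Hp Hq) as Hc. fold s in Hc.
  pose proof (hcosh_ge_1 p q Hp Hq).
  apply hdist_lt_iff; try apply horo_stretch_pos; [lra |].
  assert (M * (hcosh p q - 1) < cosh eps - 1).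
  { apply (Rmult_lt_compat_l M) in Hnear; [| lra]. unfold a in Hnear.
    replace (M * (1 + (cosh eps - 1) / M)) with (M + (cosh eps - 1)) in Hnear by (field; lra).
    lra. }
  nra.
Qed.

Lemma horo_stretch_triangle K p : 0 < K -> ideal_triangle p -> ideal_triangle (horo_stretch K p).
Proof.
  intros HK Ht. destruct (Rle_dec (bus p) 0) as [Hout | Hin].
  { rewrite horo_stretch_out by (try apply Ht; assumption). exact Ht. }
  destruct p as [x y]. unfold ideal_triangle in *. simpl in *. destruct Ht as [Hy [Hx Hn]].
  pose proof (exp_ge_1 (stretch_pos K (bus (x, y)))).
  assert (0 <= stretch_pos K (bus (x, y))) by (left; apply stretch_pos_gt_0; lra).
  pose proof (pow2_ge_0 x). repeat split; try tauto; nra.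
Qed.

(** * The three cusps of the ideal triangle *)

Inductive cusp := Cinf | Cone | Cmone.

Definition cusp_chart (c : cusp) : pt -> pt :=
  match c with Cinf => fun p => p | Cone => inversion 1 | Cmone => inversion (-1) end.

Definition bus_at (c : cusp) (p : pt) : R := bus (cusp_chart c p).

Definition horo_stretch_at (K : R) (c : cusp) (p : pt) : pt :=
  cusp_chart c (horo_stretch K (cusp_chart c p)).

Section Cusp.

Variable c : cusp.

Lemma cusp_chart_pos p : 0 < snd p -> 0 < snd (cusp_chart c p).
Proof. destruct c; cbn [cusp_chart]; auto using inversion_pos. Qed.

Lemma cusp_chart_involutive p : 0 < snd p -> cusp_chart c (cusp_chart c p) = p.
Proof. destruct c; cbn [cusp_chart]; auto using inversion_involutive. Qed.

Lemma hdist_cusp_chart p q : 0 < snd p -> 0 < snd q ->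
  hdist (cusp_chart c p) (cusp_chart c q) = hdist p q.
Proof. destruct c; cbn [cusp_chart]; auto using hdist_inversion. Qed.

Lemma cusp_chart_triangle p : ideal_triangle p -> ideal_triangle (cusp_chart c p).
Proof. destruct c; cbn [cusp_chart]; auto using inversion_triangle. Qed.

Lemma bus_at_lipschitz p q : 0 < snd p -> 0 < snd q -> Rabs (bus_at c p - bus_at c q) <= hdist p q.
Proof.
  intros. unfold bus_at. rewrite <- hdist_cusp_chart by assumption.
  apply bus_lipschitz; apply cusp_chart_pos; assumption.
Qed.

Lemma horo_stretch_at_pos K p : 0 < snd (horo_stretch_at K c p).
Proof. apply cusp_chart_pos, horo_stretch_pos. Qed.

Lemma bus_horo_stretch_at K p : bus_at c (horo_stretch_at K c p) = stretch_pos K (bus_at c p).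
Proof.
  unfold bus_at, horo_stretch_at. rewrite cusp_chart_involutive by apply horo_stretch_pos.
  apply bus_horo_stretch.
Qed.

Lemma horo_stretch_at_out K p : 0 < snd p -> bus_at c p <= 0 -> horo_stretch_at K c p = p.
Proof.
  intros. unfold horo_stretch_at.
  rewrite horo_stretch_out by (try apply cusp_chart_pos; assumption).
  apply cusp_chart_involutive; assumption.
Qed.

Lemma horo_stretch_at_inv K p : 0 < K -> 0 < snd p ->
  horo_stretch_at (/ K) c (horo_stretch_at K c p) = p.
Proof.
  intros. unfold horo_stretch_at. rewrite cusp_chart_involutive by apply horo_stretch_pos.
  rewrite horo_stretch_inv by (try apply cusp_chart_pos; assumption).
  apply cusp_chart_involutive; assumption.
Qed.

Lemma horo_stretch_at_lipschitz K p q : 1 <= K -> 0 < snd p -> 0 < snd q ->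
  hdist (horo_stretch_at K c p) (horo_stretch_at K c q) <= K * hdist p q.
Proof.
  intros. unfold horo_stretch_at. rewrite hdist_cusp_chart by apply horo_stretch_pos.
  rewrite <- (hdist_cusp_chart p q) by assumption.
  apply horo_stretch_lipschitz; try apply cusp_chart_pos; assumption.
Qed.

Lemma horo_stretch_at_hdist_out K p r : 1 <= K -> 0 < snd p -> 0 < snd r ->
  0 <= bus_at c p -> bus_at c r <= 0 ->
  hdist (horo_stretch_at K c p) r <= hdist p r + (K - 1) * bus_at c p.
Proof.
  intros. unfold horo_stretch_at. rewrite <- (cusp_chart_involutive r) at 1 by assumption.
  rewrite hdist_cusp_chart by (try apply horo_stretch_pos; apply cusp_chart_pos; assumption).
  rewrite <- (hdist_cusp_chart p r) by assumption.
  apply horo_stretch_hdist_out; try apply cusp_chart_pos; assumption.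
Qed.

Lemma horo_stretch_at_continuous K : 0 < K -> hcontinuous_on half_plane (horo_stretch_at K c).
Proof.
  intros HK p Hp eps Heps.
  destruct (horo_stretch_continuous K HK (cusp_chart c p) (cusp_chart_pos p Hp) eps Heps)
    as [d [Hd Hnear]].
  exists d; split; [exact Hd |]. intros q Hq Hpq. unfold horo_stretch_at.
  rewrite hdist_cusp_chart by apply horo_stretch_pos.
  apply Hnear; [apply cusp_chart_pos; exact Hq |]. rewrite hdist_cusp_chart; assumption.
Qed.

Lemma horo_stretch_at_triangle K p :
  0 < K -> ideal_triangle p -> ideal_triangle (horo_stretch_at K c p).
Proof.
  intros; apply cusp_chart_triangle, horo_stretch_triangle, cusp_chart_triangle; assumption.
Qed.

End Cusp.

Lemma bus_at_Cmone_inversion_one q : 0 < snd q -> bus_at Cmone (inversion 1 q) = bus_at Cmone q.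
Proof.
  destruct q as [x y]; intros Hy. unfold bus_at, bus; simpl in *. f_equal.
  pose proof (sum_sq_pos (x - 1) y Hy); pose proof (sum_sq_pos (x + 1) y Hy).
  unfold inversion; simpl. replace (x - -1) with (x + 1) by ring.
  field. repeat split; intro Hz; nra.
Qed.

Lemma bus_at_add_le_hdist c c' p q : c <> c' -> 0 < snd p -> 0 < snd q ->
  0 <= bus_at c p -> 0 <= bus_at c' q -> bus_at c p + bus_at c' q <= hdist p q.
Proof.
  assert (Hone_mone : forall u v, 0 < snd u -> 0 < snd v -> 0 <= bus_at Cone u ->
            0 <= bus_at Cmone v -> bus_at Cone u + bus_at Cmone v <= hdist u v).
  { intros u v Hu Hv. rewrite <- (bus_at_Cmone_inversion_one v), <- (hdist_inversion 1 u v)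
      by assumption.
    apply bus_add_bus_inversion_le_hdist; apply inversion_pos; assumption. }
  intros Hne Hp Hq.
  destruct c, c'; try congruence; try (apply bus_add_bus_inversion_le_hdist; assumption);
    try (apply Hone_mone; assumption);
    rewrite hdist_sym, Rplus_comm; intros;
    first [apply bus_add_bus_inversion_le_hdist | apply Hone_mone]; assumption.
Qed.

Lemma horoballs_disjoint c c' p : c <> c' -> 0 < snd p -> 0 <= bus_at c p -> bus_at c' p <= 0.
Proof.
  intros Hne Hp Hc. destruct (Rle_or_lt (bus_at c' p) 0) as [| Hc']; [assumption |].
  pose proof (bus_at_add_le_hdist c c' p p Hne Hp Hp Hc ltac:(lra)) as Hsum.
  rewrite hdist_refl in Hsum. lra.
Qed.

(** * The stretch map of the ideal triangle *)

(* The horoballs at the cusps are disjoint and each stretch fixes the complement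
   of its horoball, so the order of the tests is immaterial. *)
Definition triangle_stretch (K : R) (p : pt) : pt :=
  if Rlt_dec 0 (bus_at Cone p) then horo_stretch_at K Cone p
  else if Rlt_dec 0 (bus_at Cmone p) then horo_stretch_at K Cmone p
  else horo_stretch_at K Cinf p.

Definition outside_others (c : cusp) (p : pt) : Prop := forall c', c' <> c -> bus_at c' p <= 0.

Lemma cusp_eq_dec (u v : cusp) : {u = v} + {u <> v}.
Proof. decide equality. Qed.

Lemma outside_others_of_bus_pos c p : 0 < snd p -> 0 < bus_at c p -> outside_others c p.
Proof. intros Hp Hc c' Hne. apply (horoballs_disjoint c c'); [congruence | assumption | lra]. Qed.

Lemma bus_at_pos_or_nonpos p : (exists c, 0 < bus_at c p) \/ (forall c, bus_at c p <= 0).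
Proof.
  destruct (Rlt_dec 0 (bus_at Cinf p)); [left; eauto |].
  destruct (Rlt_dec 0 (bus_at Cone p)); [left; eauto |].
  destruct (Rlt_dec 0 (bus_at Cmone p)); [left; eauto |].
  right; intros []; lra.
Qed.

Lemma triangle_stretch_outside_others K c p : 0 < snd p -> outside_others c p ->
  triangle_stretch K p = horo_stretch_at K c p.
Proof.
  intros Hp Hc.
  assert (Hfix : forall c', bus_at c' p <= 0 -> horo_stretch_at K c' p = p)
    by (intros; apply horo_stretch_at_out; assumption).
  assert (Hin : forall c', 0 < bus_at c' p -> c' = c).
  { intros c' Hc'. destruct (cusp_eq_dec c' c) as [| Hne]; [assumption |].
    specialize (Hc c' Hne); lra. }
  unfold triangle_stretch.
  destruct (Rlt_dec 0 (bus_at Cone p)) as [H1 | H1]; [rewrite (Hin Cone H1); reflexivity |].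
  destruct (Rlt_dec 0 (bus_at Cmone p)) as [H2 | H2]; [rewrite (Hin Cmone H2); reflexivity |].
  apply Rnot_lt_le in H1, H2.
  destruct c; [reflexivity | |]; rewrite !Hfix;
    solve [reflexivity | apply Hc; discriminate | assumption].
Qed.

Lemma outside_others_common_or_apart p q : 0 < snd p -> 0 < snd q ->
  (exists c, outside_others c p /\ outside_others c q) \/
  (exists u v, u <> v /\ 0 < bus_at u p /\ 0 < bus_at v q).
Proof.
  intros Hp Hq.
  destruct (bus_at_pos_or_nonpos p) as [[u Hu] | Hall];
    destruct (bus_at_pos_or_nonpos q) as [[v Hv] | Hall'].
  - destruct (cusp_eq_dec u v) as [-> | Hne]; [left | right; eauto].
    exists v; split; apply outside_others_of_bus_pos; assumption.
  - left; exists u; split; [apply outside_others_of_bus_pos; assumption | intros c _; apply Hall'].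
  - left; exists v; split; [intros c _; apply Hall | apply outside_others_of_bus_pos; assumption].
  - left; exists Cinf; split; intros c _; [apply Hall | apply Hall'].
Qed.


Lemma outside_others_near p : 0 < snd p -> exists delta, 0 < delta /\
  forall q, 0 < snd q -> hdist p q < delta -> exists c, outside_others c p /\ outside_others c q.
Proof.
  intros Hp. destruct (bus_at_pos_or_nonpos p) as [[u Hu] | Hall].
  - exists (bus_at u p). split; [exact Hu |]. intros q Hq Hpq. exists u.
    pose proof (bus_at_lipschitz u p q Hp Hq); pose proof (Rle_abs (bus_at u p - bus_at u q)).
    split; apply outside_others_of_bus_pos; lra.
  - exists 1. split; [lra |]. intros q Hq _.
    destruct (outside_others_common_or_apart p q Hp Hq) as [| [u [v [_ [Hu _]]]]]; [assumption |].
    specialize (Hall u); lra.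
Qed.

Lemma triangle_stretch_lipschitz K p q : 1 <= K -> 0 < snd p -> 0 < snd q ->
  hdist (triangle_stretch K p) (triangle_stretch K q) <= K * hdist p q.
Proof.
  intros HK Hp Hq.
  destruct (outside_others_common_or_apart p q Hp Hq) as [[c [Hcp Hcq]] | [u [v [Huv [Hu Hv]]]]].
  { rewrite !(triangle_stretch_outside_others K c) by assumption.
    apply horo_stretch_at_lipschitz; assumption. }
  rewrite (triangle_stretch_outside_others K u p), (triangle_stretch_outside_others K v q)
    by (try apply outside_others_of_bus_pos; assumption).
  set (q' := horo_stretch_at K v q).
  assert (Hq' : 0 < snd q') by apply horo_stretch_at_pos.
  assert (Hvq' : 0 < bus_at v q')
    by (unfold q'; rewrite bus_horo_stretch_at; apply stretch_pos_gt_0; lra).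
  pose proof (horo_stretch_at_hdist_out u K p q' HK Hp Hq' ltac:(lra)
                (horoballs_disjoint v u q' ltac:(congruence) Hq' ltac:(lra))) as Hp_out.
  pose proof (horo_stretch_at_hdist_out v K q p HK Hq Hp ltac:(lra)
                (horoballs_disjoint u v p Huv Hp ltac:(lra))) as Hq_out.
  rewrite (hdist_sym p q') in Hp_out. rewrite (hdist_sym q p) in Hq_out.
  (* the depths added on both sides sum to at most the distance *)
  pose proof (bus_at_add_le_hdist u v p q Huv Hp Hq ltac:(lra) ltac:(lra)) as Hdepth.
  apply (Rmult_le_compat_l (K - 1)) in Hdepth; fold q' in Hq_out; lra.
Qed.

Lemma triangle_stretch_inv K p :
  0 < K -> 0 < snd p -> triangle_stretch (/ K) (triangle_stretch K p) = p.
Proof.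
  intros HK Hp. destruct (bus_at_pos_or_nonpos p) as [[u Hu] | Hall].
  - rewrite (triangle_stretch_outside_others K u p)
      by (try apply outside_others_of_bus_pos; assumption).
    rewrite (triangle_stretch_outside_others (/ K) u);
      [apply horo_stretch_at_inv; assumption | apply horo_stretch_at_pos |].
    apply outside_others_of_bus_pos; [apply horo_stretch_at_pos |].
    rewrite bus_horo_stretch_at. apply stretch_pos_gt_0; assumption.
  - assert (Hfix : forall L, triangle_stretch L p = p).
    { intros L. rewrite (triangle_stretch_outside_others L Cinf) by (try intros c _; auto).
      apply horo_stretch_at_out; auto. }
    rewrite !Hfix. reflexivity.
Qed.

Lemma triangle_stretch_triangle K p :
  0 < K -> ideal_triangle p -> ideal_triangle (triangle_stretch K p).
Proof.
  intros. unfold triangle_stretch.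
  destruct Rlt_dec; [| destruct Rlt_dec]; apply horo_stretch_at_triangle; assumption.
Qed.

Lemma triangle_stretch_continuous K : 0 < K -> hcontinuous_on half_plane (triangle_stretch K).
Proof.
  intros HK p Hp eps Heps.
  destruct (outside_others_near p Hp) as [d0 [Hd0 Hnear]].
  destruct (horo_stretch_at_continuous Cinf K HK p Hp eps Heps) as [d1 [Hd1 H1]].
  destruct (horo_stretch_at_continuous Cone K HK p Hp eps Heps) as [d2 [Hd2 H2]].
  destruct (horo_stretch_at_continuous Cmone K HK p Hp eps Heps) as [d3 [Hd3 H3]].
  exists (Rmin d0 (Rmin d1 (Rmin d2 d3))).
  split; [repeat apply Rmin_glb_lt; assumption |]. intros q Hq Hpq.
  pose proof (Rmin_l d0 (Rmin d1 (Rmin d2 d3))); pose proof (Rmin_r d0 (Rmin d1 (Rmin d2 d3))).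
  pose proof (Rmin_l d1 (Rmin d2 d3)); pose proof (Rmin_r d1 (Rmin d2 d3));
    pose proof (Rmin_l d2 d3); pose proof (Rmin_r d2 d3).
  destruct (Hnear q Hq ltac:(lra)) as [c [Hcp Hcq]].
  rewrite !(triangle_stretch_outside_others K c) by assumption.
  destruct c; [apply H1 | apply H2 | apply H3]; (assumption || lra).
Qed.

(** * The sides *)

Lemma maps_side_stretching_of_param f S (P : R -> pt) K : 0 < K ->
  (forall p, S p <-> exists s, p = P s) -> (forall a b, hdist (P a) (P b) = Rabs (a - b)) ->
  (forall s, f (P s) = P (K * s)) -> maps_side_stretching f S K.
Proof.
  intros HK HS Hd Hf. split; [| split].
  - intros p [s ->]%HS. rewrite Hf. apply HS; eauto.
  - intros q [s ->]%HS. exists (P (s / K)). split; [apply HS; eauto |].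
    rewrite Hf. f_equal. field. lra.
  - intros p q [a ->]%HS [b ->]%HS. rewrite !Hf, !Hd.
    replace (K * a - K * b) with (K * (a - b)) by ring.
    rewrite Rabs_mult, (Rabs_right K) by lra. reflexivity.
Qed.

(* A geodesic joining the cusps [c1] and [c2], parametrised by the depth in the
   horoball at [c1]. *)
Lemma triangle_stretch_geodesic K (P : R -> pt) c1 c2 : 0 < K -> c1 <> c2 ->
  (forall s, 0 < snd (P s)) ->
  (forall s, bus_at c1 (P s) = s) -> (forall s, bus_at c2 (P s) = - s) ->
  (forall s c, c <> c1 -> c <> c2 -> bus_at c (P s) <= 0) ->
  (forall s, horo_stretch_at K c1 (P s) = P (stretch_pos K s)) ->
  (forall s, horo_stretch_at K c2 (P s) = P (- stretch_pos K (- s))) ->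
  forall s, triangle_stretch K (P s) = P (K * s).
Proof.
  intros HK H12 HP H1 H2 H3 Hs1 Hs2 s.
  destruct (Rle_or_lt 0 s) as [Hs | Hs].
  - assert (Hav : outside_others c1 (P s)).
    { intros c Hc. destruct (cusp_eq_dec c c2) as [-> |]; [rewrite H2; lra |].
      apply H3; assumption. }
    rewrite (triangle_stretch_outside_others K c1), Hs1, stretch_pos_nonneg
      by (apply HP || assumption).
    reflexivity.
  - assert (Hav : outside_others c2 (P s)).
    { intros c Hc. destruct (cusp_eq_dec c c1) as [-> |]; [rewrite H1; lra |].
      apply H3; assumption. }
    rewrite (triangle_stretch_outside_others K c2), Hs2, stretch_pos_nonneg
      by (apply HP || assumption || lra).
    f_equal; ring.
Qed.

Lemma hdist_vertical x a b : hdist (x, 2 * exp a) (x, 2 * exp b) = Rabs (a - b).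
Proof.
  rewrite <- (arcosh_cosh (Rabs (a - b))) by apply Rabs_pos. rewrite cosh_Rabs.
  change (arcosh (hcosh (x, 2 * exp a) (x, 2 * exp b)) = arcosh (cosh (a - b))). f_equal.
  rewrite hcosh_bus, !bus_vertical by (simpl; pose proof (exp_pos a); pose proof (exp_pos b); lra).
  simpl. unfold Rdiv. ring.
Qed.

Lemma inversion_vertical a s : inversion a (a, 2 * exp s) = (a, 2 * exp (- s)).
Proof.
  unfold inversion; cbn [fst snd]. rewrite exp_Ropp. pose proof (exp_pos s).
  pose proof (sum_sq_pos (a - a) (2 * exp s) ltac:(lra)).
  f_equal; field; try split; lra.
Qed.

Lemma bus_inversion_vertical_far a x s : (x - a) ^ 2 = 4 -> bus (inversion a (x, 2 * exp s)) <= 0.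
Proof.
  intros Hxa. pose proof (exp_pos s) as HE.
  rewrite <- ln_1.
  apply ln_le_compat; [apply Rdiv_lt_0_compat; [apply inversion_pos; simpl |]; lra |].
  unfold inversion; cbn [fst snd]. rewrite Hxa.
  set (E := exp s) in *. apply (Rmult_le_reg_r (2 * (4 + (2 * E) ^ 2))); [nra |].
  replace (4 * (2 * E) / (4 + (2 * E) ^ 2) / 2 * (2 * (4 + (2 * E) ^ 2))) with (8 * E)
    by (field; nra).
  pose proof (pow2_ge_0 (E - 1)). nra.
Qed.

Definition left_pt (s : R) : pt := (-1, 2 * exp s).
Definition right_pt (s : R) : pt := (1, 2 * exp s).
Definition bottom_pt (s : R) : pt := inversion 1 (left_pt s).

Lemma left_pt_pos s : 0 < snd (left_pt s).
Proof. simpl; pose proof (exp_pos s); lra. Qed.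

Lemma right_pt_pos s : 0 < snd (right_pt s).
Proof. simpl; pose proof (exp_pos s); lra. Qed.

Lemma bottom_pt_pos s : 0 < snd (bottom_pt s).
Proof. apply inversion_pos, left_pt_pos. Qed.

Lemma vertical_side_param (x : R) (p : pt) :
  0 < snd p /\ fst p = x <-> exists s, p = (x, 2 * exp s).
Proof.
  destruct p as [y h]; simpl. split.
  - intros [Hh ->]. exists (bus (x, h)). rewrite exp_bus by assumption. simpl. f_equal. field.
  - intros [s Hs]. injection Hs as -> ->. pose proof (exp_pos s). split; [lra | reflexivity].
Qed.

Lemma bottom_side_param p : side_bottom p <-> exists s, p = bottom_pt s.
Proof.
  split.
  - destruct p as [x y]. intros [Hy Hn]. simpl in *.
    assert (Hx : x < 1) by (assert (0 < y ^ 2) by (apply pow_lt; assumption); nra).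
    exists (bus (inversion 1 (x, y))). unfold bottom_pt, left_pt.
    rewrite exp_bus by (apply inversion_pos; assumption).
    rewrite <- (inversion_involutive 1 (x, y)) at 1 by assumption. f_equal.
    unfold inversion; cbn [fst snd].
    replace ((x - 1) ^ 2 + y ^ 2) with (2 - 2 * x)
      by (replace (y ^ 2) with (1 - x ^ 2) by lra; ring).
    f_equal; field; lra.
  - intros [s ->]. split; [apply bottom_pt_pos |].
    unfold bottom_pt, inversion, left_pt; cbn [fst snd]. pose proof (exp_pos s).
    assert (0 < (-1 - 1) ^ 2 + (2 * exp s) ^ 2) by (apply sum_sq_pos; lra).
    field. lra.
Qed.

Lemma inversion_mone_bottom_pt s : inversion (-1) (bottom_pt s) = right_pt (- s).
Proof.
  unfold bottom_pt, inversion, left_pt, right_pt; cbn [fst snd]. rewrite exp_Ropp.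
  pose proof (exp_pos s). set (E := exp s) in *.
  f_equal; field; repeat split; try lra; nra.
Qed.

Section Sides.

Variable K : R.
Hypothesis HK : 0 < K.

Lemma triangle_stretch_left : maps_side_stretching (triangle_stretch K) side_left K.
Proof.
  apply (maps_side_stretching_of_param _ _ left_pt); [assumption | apply vertical_side_param |
    intros; apply hdist_vertical |].
  apply (triangle_stretch_geodesic K left_pt Cinf Cmone); try assumption || discriminate.
  - apply left_pt_pos.
  - intros; apply bus_vertical.
  - intros; unfold bus_at, left_pt; cbn [cusp_chart].
    rewrite inversion_vertical. apply bus_vertical.
  - intros s [] ? ?; try congruence. apply bus_inversion_vertical_far. ring.
  - intros; apply horo_stretch_vertical.
  - intros; unfold horo_stretch_at, left_pt; cbn [cusp_chart].
    rewrite inversion_vertical, horo_stretch_vertical, inversion_vertical. reflexivity.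
Qed.

Lemma triangle_stretch_right : maps_side_stretching (triangle_stretch K) side_right K.
Proof.
  apply (maps_side_stretching_of_param _ _ right_pt); [assumption | apply vertical_side_param |
    intros; apply hdist_vertical |].
  apply (triangle_stretch_geodesic K right_pt Cinf Cone); try assumption || discriminate.
  - apply right_pt_pos.
  - intros; apply bus_vertical.
  - intros; unfold bus_at, right_pt; cbn [cusp_chart].
    rewrite inversion_vertical. apply bus_vertical.
  - intros s [] ? ?; try congruence. apply bus_inversion_vertical_far. ring.
  - intros; apply horo_stretch_vertical.
  - intros; unfold horo_stretch_at, right_pt; cbn [cusp_chart].
    rewrite inversion_vertical, horo_stretch_vertical, inversion_vertical. reflexivity.
Qed.

Lemma triangle_stretch_bottom : maps_side_stretching (triangle_stretch K) side_bottom K.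
Proof.
  apply (maps_side_stretching_of_param _ _ bottom_pt); [assumption | apply bottom_side_param | |].
  { intros; unfold bottom_pt. rewrite hdist_inversion by apply left_pt_pos. apply hdist_vertical. }
  assert (Hmone : forall s, inversion (-1) (right_pt s) = bottom_pt (- s)).
  { intros s. rewrite <- (Ropp_involutive s) at 1. rewrite <- inversion_mone_bottom_pt.
    apply inversion_involutive, bottom_pt_pos. }
  apply (triangle_stretch_geodesic K bottom_pt Cone Cmone); try assumption || discriminate.
  - apply bottom_pt_pos.
  - intros; unfold bus_at, bottom_pt; cbn [cusp_chart].
    rewrite inversion_involutive by apply left_pt_pos. apply bus_vertical.
  - intros; unfold bus_at; cbn [cusp_chart]. rewrite inversion_mone_bottom_pt. apply bus_vertical.
  - intros s [] ? ?; try congruence. apply bus_inversion_vertical_far. ring.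
  - intros; unfold horo_stretch_at, bottom_pt; cbn [cusp_chart].
    rewrite inversion_involutive by apply left_pt_pos. unfold left_pt.
    rewrite horo_stretch_vertical. reflexivity.
  - intros; unfold horo_stretch_at; cbn [cusp_chart].
    rewrite inversion_mone_bottom_pt. unfold right_pt. rewrite horo_stretch_vertical. apply Hmone.
Qed.

End Sides.

Theorem mainTheorem3 (K : R) (HK : 1 < K) :
  exists f : pt -> pt,
    (forall p, ideal_triangle p -> ideal_triangle (f p)) /\
    (forall p q, ideal_triangle p -> ideal_triangle q ->
       hdist (f p) (f q) <= K * hdist p q) /\
    hcontinuous_on ideal_triangle f /\
    (exists g : pt -> pt,
       (forall p, ideal_triangle p -> ideal_triangle (g p)) /\
       (forall p, ideal_triangle p -> g (f p) = p) /\
       (forall p, ideal_triangle p -> f (g p) = p) /\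
       hcontinuous_on ideal_triangle g) /\
    maps_side_stretching f side_left K /\
    maps_side_stretching f side_right K /\
    maps_side_stretching f side_bottom K.
Proof.
  assert (HK0 : 0 < K) by lra.
  assert (HKinv : 0 < / K) by (apply Rinv_0_lt_compat; lra).
  assert (Hsub : forall p, ideal_triangle p -> half_plane p) by (intros p Hp; apply Hp).
  exists (triangle_stretch K).
  refine (conj _ (conj _ (conj _ (conj _ (conj _ (conj _ _)))))).
  - intros; apply triangle_stretch_triangle; assumption.
  - intros p q Hp Hq; apply triangle_stretch_lipschitz; [lra | apply Hp | apply Hq].
  - apply (hcontinuous_on_subset _ _ _ Hsub), triangle_stretch_continuous, HK0.
  - exists (triangle_stretch (/ K)). refine (conj _ (conj _ (conj _ _))).
    + intros; apply triangle_stretch_triangle; assumption.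
    + intros p Hp; apply triangle_stretch_inv; [assumption | apply Hp].
    + intros p Hp. rewrite <- (Rinv_inv K) at 1.
      apply triangle_stretch_inv; [assumption | apply Hp].
    + apply (hcontinuous_on_subset _ _ _ Hsub), triangle_stretch_continuous, HKinv.
  - apply triangle_stretch_left, HK0.
  - apply triangle_stretch_right, HK0.
  - apply triangle_stretch_bottom, HK0.
Qed.
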